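(* For $i=1,2$ let $G_i$ be an $r_i$-regular graph with $n_i$ vertices. (a) If both $G_1$ and $G_2$ admit balanced labellings and $r_1r_2+r_1+r_2$ is coprime to $n_1n_2$, then $G_1\boxtimes G_2$ is $\mathbb{Z}_{n_1n_2}$-distance antimagic. (b) If $G_1$ is $\mathbb{Z}_{n_1}$-distance magic, $G_2$ is $\mathbb{Z}_{n_2}$-distance magic, $\gcd(r_1,n_2)=1$ and $\gcd(r_2,n_1)=1$, then $G_1\boxtimes G_2$ is $\mathbb{Z}_{n_1n_2}$-distance antimagic.
   Context: The strong product $G_1\boxtimes G_2$ has vertex set $V(G_1)\times V(G_2)$, with distinct $(x_1,x_2),(y_1,y_2)$ adjacent iff for each $i$ either $x_i=y_i$ or $x_iy_i\in E(G_i)$. For an $r$-regular graph $G$ with $n$ vertices, a balanced labelling is a bijection $f:V(G)\to\mathbb{Z}_n$ with $\sum_{y\in N(x)}f(y)\equiv rf(x)\pmod n$ for all $x$ ($N(x)$ the open neighbourhood). For a graph $G$ with $n$ vertices and a bijection $f:V(G)\to\mathbb{Z}_n$, the weight is $w_f(x)=\sum_{y\in N(x)} f(y)$ mod $n$; $f$ is $\mathbb{Z}_n$-distance antimagic if the weights are pairwise distinct, and $\mathbb{Z}_n$-distance magic if all weights are equal. $G$ is $\mathbb{Z}_n$-distance antimagic (resp. magic) if it admits such a labelling. *)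

From mathcomp Require Import all_boot.
Set Implicit Arguments. Unset Strict Implicit. Unset Printing Implicit Defensive.

Definition simple_graph (T : finType) (e : rel T) : Prop :=
  symmetric e /\ irreflexive e.

Definition nbhd (T : finType) (e : rel T) (x : T) : {set T} := [set y | e x y].

Definition regular (T : finType) (e : rel T) (r : nat) : Prop :=
  forall x, #|nbhd e x| = r.

Definition strong_prod (T1 T2 : finType) (e1 : rel T1) (e2 : rel T2) :
  rel (T1 * T2)%type :=
  fun x y => [&& x != y, (x.1 == y.1) || e1 x.1 y.1 & (x.2 == y.2) || e2 x.2 y.2].

(* Weight w_f(x) = sum of labels over N(x), as a natural number
   (to be read modulo n). Labels in Z_n are represented by 'I_n. *)
Definition weight (T : finType) (e : rel T) (n : nat) (f : T -> 'I_n) (x : T) : nat :=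
  \sum_(y in nbhd e x) (f y : nat).

Definition balanced_labelling (T : finType) (e : rel T) (r n : nat)
  (f : T -> 'I_n) : Prop :=
  bijective f /\ forall x, weight e f x = r * f x %[mod n].

Definition has_balanced_labelling (T : finType) (e : rel T) (r : nat) : Prop :=
  exists f : T -> 'I_#|T|, balanced_labelling e r f.

Definition Zn_distance_antimagic (T : finType) (e : rel T) (n : nat) : Prop :=
  exists f : T -> 'I_n, bijective f /\
    forall x y, weight e f x = weight e f y %[mod n] -> x = y.

Definition Zn_distance_magic (T : finType) (e : rel T) (n : nat) : Prop :=
  exists f : T -> 'I_n, bijective f /\
    forall x y, weight e f x = weight e f y %[mod n].

From mathcomp Require Import all_boot zify.
Set Implicit Arguments. Unset Strict Implicit. Unset Printing Implicit Defensive.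

(* Given labellings f1 : T1 -> Z_n1 and f2 : T2 -> Z_n2 we label the strong
   product by  g (x1, x2) = n2 * f1 x1 + f2 x2,  a bijection onto Z_(n1 n2).
   Since the closed neighbourhood of (x1, x2) in the strong product is the
   product of the closed neighbourhoods of x1 and x2, a double counting gives
   (for r_i-regular G_i)
       w_g (x1, x2) = n2 * Q_(r2) f1 x1 + Q_(r1) f2 x2,
   where Q_s f x = s * f x + (s + 1) * w_f x is the "separating weight".
   Reducing modulo n2 and then modulo n1 shows that g is antimagic as soon as
   each Q_s f_i is injective modulo n_i ("f_i is s-separating").  Finally a
   balanced labelling is s-separating when r s + r + s is coprime to n, and a
   distance magic labelling is s-separating when s is coprime to n; both
   reduce to cancelling a unit in a congruence.  Parts (a) and (b) of the
   theorem follow by instantiating the product lemma; only looplessness and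
   regularity of the factors are used, not symmetry. *)

Lemma coprime_modn_cancel {k n a b : nat} :
  coprime k n -> k * a = k * b %[mod n] -> a = b %[mod n].
Proof.
move=> cop; wlog le_ba : a b / b <= a => [hwlog|].
  case: (leqP b a) => [le_ba | /ltnW le_ab kab]; first exact: hwlog.
  by apply/esym/hwlog; last apply/esym.
move/eqP; rewrite (eqn_mod_dvd _ (leq_mul (leqnn k) le_ba)) -mulnBr.
rewrite Gauss_dvdr; last by rewrite coprime_sym.
by rewrite -eqn_mod_dvd // => /eqP.
Qed.

Lemma label_inj_mod (T : finType) (n : nat) (f : T -> 'I_n) (x y : T) :
  bijective f -> f x = f y %[mod n] -> x = y.
Proof.
move=> bij_f; rewrite !modn_small // => fxy.
exact/(bij_inj bij_f)/val_inj.
Qed.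

Section Separating.

Variables (T : finType) (e : rel T) (n : nat).

Definition sep_weight (s : nat) (f : T -> 'I_n) (x : T) : nat :=
  s * f x + s.+1 * weight e f x.

Definition separating (s : nat) (f : T -> 'I_n) : Prop :=
  forall x y, sep_weight s f x = sep_weight s f y %[mod n] -> x = y.

(* For a balanced labelling, Q_s f x = (r s + r + s) * f x modulo n. *)
Lemma balanced_separating (r s : nat) (f : T -> 'I_n) :
  balanced_labelling e r f -> coprime (r * s + r + s) n -> separating s f.
Proof.
move=> [bij_f bal] cop x y.
have sepE z : sep_weight s f z = (r * s + r + s) * f z %[mod n].
  rewrite /sep_weight -modnDmr -modnMmr bal modnMmr modnDmr.
  by congr (_ %% n); lia.
rewrite sepE [in RHS]sepE => /(coprime_modn_cancel cop).
exact: label_inj_mod.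
Qed.

(* For a distance magic labelling the weight term is constant modulo n. *)
Lemma magic_separating (s : nat) (f : T -> 'I_n) :
  bijective f -> (forall x y, weight e f x = weight e f y %[mod n]) ->
  coprime s n -> separating s f.
Proof.
move=> bij_f magic cop x y.
have sepE z : sep_weight s f z = s * f z + s.+1 * weight e f x %[mod n].
  by rewrite /sep_weight -modnDmr -modnMmr (magic z x) modnMmr modnDmr.
rewrite sepE [in RHS]sepE => /eqP; rewrite eqn_modDr => /eqP.
by move/(coprime_modn_cancel cop); apply: label_inj_mod.
Qed.

End Separating.

Definition cnbhd (T : finType) (e : rel T) (x : T) : {set T} := x |: nbhd e x.

Lemma sum_cnbhd (T : finType) (e : rel T) (g : T -> nat) (x : T) :
  irreflexive e -> \sum_(y in cnbhd e x) g y = g x + \sum_(y in nbhd e x) g y.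
Proof. by move=> irr_e; rewrite big_setU1 // inE irr_e. Qed.

Lemma card_cnbhd (T : finType) (e : rel T) (r : nat) (x : T) :
  irreflexive e -> regular e r -> #|cnbhd e x| = r.+1.
Proof. by move=> irr_e reg_e; rewrite cardsU1 inE irr_e reg_e. Qed.

Lemma strong_prod_irreflexive (T1 T2 : finType) (e1 : rel T1) (e2 : rel T2) :
  irreflexive (strong_prod e1 e2).
Proof. by move=> x; rewrite /strong_prod eqxx. Qed.

Lemma cnbhd_strong_prod (T1 T2 : finType) (e1 : rel T1) (e2 : rel T2)
    (x : T1 * T2) :
  cnbhd (strong_prod e1 e2) x = setX (cnbhd e1 x.1) (cnbhd e2 x.2).
Proof.
apply/setP => y; rewrite in_setU1 !inE /strong_prod (eq_sym x).
case: (y =P x) => [-> | /eqP neq_yx] /=; first by rewrite !eqxx.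
by case: y neq_yx => y1 y2; rewrite (eq_sym x.1) (eq_sym x.2).
Qed.

Lemma sum_setX_add (I J : finType) (A : {set I}) (B : {set J})
    (h1 : I -> nat) (h2 : J -> nat) :
  \sum_(p in setX A B) (h1 p.1 + h2 p.2)
  = #|B| * \sum_(a in A) h1 a + #|A| * \sum_(b in B) h2 b.
Proof.
rewrite (eq_bigl (fun p => (p.1 \in A) && (p.2 \in B))); last first.
  by case=> a b; rewrite in_setX.
rewrite -(pair_big (mem A) (mem B) (fun a b => h1 a + h2 b)) /=.
under eq_bigr => a _ do rewrite big_split /= sum_nat_const.
by rewrite big_split /= sum_nat_const -big_distrr /= mulnC.
Qed.

Section ProductLabel.

Variables n1 n2 : nat.

Lemma mix_label_subproof (a : 'I_n1) (b : 'I_n2) : n2 * a + b < n1 * n2.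
Proof. have := ltn_ord a; have := ltn_ord b; nia. Qed.

Definition mix_label (a : 'I_n1) (b : 'I_n2) : 'I_(n1 * n2) :=
  Ordinal (mix_label_subproof a b).

Lemma mix_label_inj (a a' : 'I_n1) (b b' : 'I_n2) :
  mix_label a b = mix_label a' b' -> a = a' /\ b = b'.
Proof.
move/(congr1 val) => /= eq_ab.
have eq_b : b = b'.
  apply: val_inj; have := congr1 (modn^~ n2) eq_ab.
  by rewrite /= ![n2 * _]mulnC !modnMDl !modn_small.
split=> //; apply: val_inj; apply/eqP.
move: eq_ab; rewrite eq_b => /addIn /eqP.
by rewrite eqn_pmul2l // (leq_ltn_trans (leq0n b') (ltn_ord b')).
Qed.

Variables (T1 T2 : finType).

Definition prod_label (f1 : T1 -> 'I_n1) (f2 : T2 -> 'I_n2) (p : T1 * T2) :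
  'I_(n1 * n2) := mix_label (f1 p.1) (f2 p.2).

Lemma prod_labelE (f1 : T1 -> 'I_n1) (f2 : T2 -> 'I_n2) (p : T1 * T2) :
  prod_label f1 f2 p = n2 * f1 p.1 + f2 p.2 :> nat.
Proof. by []. Qed.

Lemma prod_label_bij (f1 : T1 -> 'I_n1) (f2 : T2 -> 'I_n2) :
  bijective f1 -> bijective f2 -> bijective (prod_label f1 f2).
Proof.
move=> bij_f1 bij_f2; apply: inj_card_bij.
  move=> [x1 x2] [y1 y2] /mix_label_inj /= [eq_1 eq_2].
  by rewrite (bij_inj bij_f1 eq_1) (bij_inj bij_f2 eq_2).
by rewrite card_prod (bij_eq_card bij_f1) (bij_eq_card bij_f2) !card_ord.
Qed.

End ProductLabel.

Section StrongProduct.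

Variables (T1 T2 : finType) (e1 : rel T1) (e2 : rel T2) (r1 r2 n1 n2 : nat).
Hypotheses (irr_e1 : irreflexive e1) (irr_e2 : irreflexive e2).
Hypotheses (reg_e1 : regular e1 r1) (reg_e2 : regular e2 r2).

(* The weight of the product labelling, obtained by double counting over the
   closed neighbourhood N[x1] x N[x2]:
     w (x1, x2) = n2 * Q_(r2) f1 x1 + Q_(r1) f2 x2. *)
Lemma weight_strong_prod (f1 : T1 -> 'I_n1) (f2 : T2 -> 'I_n2) (x : T1 * T2) :
  weight (strong_prod e1 e2) (prod_label f1 f2) x
  = n2 * sep_weight e1 r2 f1 x.1 + sep_weight e2 r1 f2 x.2.
Proof.
have := sum_cnbhd (fun y => n2 * f1 y.1 + f2 y.2) x
  (strong_prod_irreflexive e1 e2).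
rewrite cnbhd_strong_prod (sum_setX_add _ _ (fun a => n2 * f1 a) (fun b => f2 b)).
rewrite !sum_cnbhd // (card_cnbhd _ irr_e1 reg_e1) (card_cnbhd _ irr_e2 reg_e2).
rewrite /sep_weight /weight (eq_bigr _ (fun y _ => prod_labelE f1 f2 y)).
by rewrite -big_distrr /=; nia.
Qed.

(* If f1 is r2-separating and f2 is r1-separating, the product labelling is
   Z_(n1 n2)-distance antimagic: the weight modulo n2 recovers x2, and then
   the weight modulo n1 n2 recovers x1. *)
Lemma strong_prod_antimagic (f1 : T1 -> 'I_n1) (f2 : T2 -> 'I_n2) :
  bijective f1 -> bijective f2 ->
  separating e1 r2 f1 -> separating e2 r1 f2 ->
  Zn_distance_antimagic (strong_prod e1 e2) (n1 * n2).
Proof.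
move=> bij_f1 bij_f2 sep_f1 sep_f2.
exists (prod_label f1 f2); split; first exact: prod_label_bij.
move=> [x1 x2] [y1 y2]; rewrite !weight_strong_prod /= => eq_w.
have eq_2 : x2 = y2.
  apply: sep_f2; have := congr1 (modn^~ n2) eq_w.
  by rewrite /= !modn_dvdm ?dvdn_mull // ![n2 * _]mulnC !modnMDl.
move: eq_w; rewrite -eq_2 => /eqP; rewrite eqn_modDr [n1 * n2]mulnC -!muln_modr.
rewrite eqn_pmul2l; last exact: leq_ltn_trans (leq0n _) (ltn_ord (f2 x2)).
by move/eqP/sep_f1 ->.
Qed.

End StrongProduct.

Theorem mainTheorem16 (T1 T2 : finType) (e1 : rel T1) (e2 : rel T2)
  (r1 r2 n1 n2 : nat) :
  simple_graph e1 -> simple_graph e2 ->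
  regular e1 r1 -> regular e2 r2 ->
  #|T1| = n1 -> #|T2| = n2 ->
  ((has_balanced_labelling e1 r1 -> has_balanced_labelling e2 r2 ->
    coprime (r1 * r2 + r1 + r2) (n1 * n2) ->
    Zn_distance_antimagic (strong_prod e1 e2) (n1 * n2))
  /\
   (Zn_distance_magic e1 n1 -> Zn_distance_magic e2 n2 ->
    coprime r1 n2 -> coprime r2 n1 ->
    Zn_distance_antimagic (strong_prod e1 e2) (n1 * n2))).
Proof.
move=> [_ irr_e1] [_ irr_e2] reg_e1 reg_e2 <- <-; split.
  move=> [f1 bal_f1] [f2 bal_f2]; rewrite coprimeMr => /andP [cop1 cop2].
  apply: (strong_prod_antimagic irr_e1 irr_e2 reg_e1 reg_e2
            (proj1 bal_f1) (proj1 bal_f2)).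
    exact: balanced_separating bal_f1 cop1.
  apply: balanced_separating bal_f2 _.
  by have -> : r2 * r1 + r2 + r1 = r1 * r2 + r1 + r2 by lia.
move=> [f1 [bij_f1 magic_f1]] [f2 [bij_f2 magic_f2]] cop12 cop21.
apply: (strong_prod_antimagic irr_e1 irr_e2 reg_e1 reg_e2 bij_f1 bij_f2).
  exact: magic_separating bij_f1 magic_f1 cop21.
exact: magic_separating bij_f2 magic_f2 cop12.
Qed.
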